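(* Consider the following $m$-round game against an adversary. In each round $i$, the adversary chooses (possibly based on the first $i-1$ rounds) numbers $0\leq p_i\leq\frac12$, $\frac{p_i}{4}\leq q_i\leq 1-p_i$, and $\gamma_i\in[0,1]$; then a random variable $X_i\in\{0,1,2\}$ is sampled with $\Pr[X_i=1]=p_i$, $\Pr[X_i=2]=q_i$, $\Pr[X_i=0]=1-p_i-q_i$, and its outcome is given to the adversary. For $k\in\mathbb R$ and $i\in[m]$ let $Z_i^{(k)}$ be the indicator of the event $\sum_{j=1}^{i}\mathbb 1\{X_j=2\}\gamma_j\leq k$, and for $j\in[m]$ let $W_j^{(k)}=\sum_{i=j}^{m}\mathbb 1\{X_i=1\}\gamma_i Z_i^{(k)}$, and $W^{(k)}=W_1^{(k)}$. Then for every adversary strategy, every $k\geq0$, every $\lambda\in\mathbb R$ and every $j\in[m]$, $$\Pr[W_j^{(k)}>\lambda]\leq\exp\left(-\frac{\lambda}{5}+3(k+1)\right).$$ In particular $\Pr[W^{(k)}>\lambda]\leq\exp\left(-\frac{\lambda}{5}+3(k+1)\right)$. *)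

From mathcomp Require Import all_boot all_order all_algebra.
From mathcomp Require Import reals sequences exp.
Set Implicit Arguments. Unset Strict Implicit. Unset Printing Implicit Defensive.
Import Order.TTheory GRing.Theory Num.Theory.
Local Open Scope ring_scope.

(* Rounds are indexed by i : 'I_m (0-based: round i here = round i+1 in the paper).
   An outcome of the whole game is x : {ffun 'I_m -> 'I_3}, x i = X_{i+1}.
   A (deterministic, adaptive) adversary is given by three functions P Q G
   mapping the history (the list of outcomes of the previous rounds) to
   p_i, q_i, gamma_i. *)

Section Game.
Variables (R : realType) (m : nat).
Variables (P Q G : seq 'I_3 -> R).

Definition outcome := {ffun 'I_m -> 'I_3}.

Definition hist (x : outcome) (i : 'I_m) : seq 'I_3 :=
  map (fun j : 'I_m => x j) (filter (fun j : 'I_m => (j < i)%N) (enum 'I_m)).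

Definition valid_adversary : Prop :=
  forall s : seq 'I_3, (size s < m)%N ->
    [/\ 0 <= P s, P s <= 1/2, P s / 4 <= Q s, Q s <= 1 - P s
      & 0 <= G s /\ G s <= 1].

Definition round_prob (p q : R) (o : 'I_3) : R :=
  if val o == 1%N then p else if val o == 2%N then q else 1 - p - q.

Definition seq_prob (x : outcome) : R :=
  \prod_(i < m) round_prob (P (hist x i)) (Q (hist x i)) (x i).

Definition ind (b : bool) : R := if b then 1 else 0.

Definition gam (x : outcome) (i : 'I_m) : R := G (hist x i).

Definition Zind (k : R) (x : outcome) (i : 'I_m) : R :=
  ind ((\sum_(j < m | (j <= i)%N) ind (val (x j) == 2%N) * gam x j) <= k).

Definition Wj (k : R) (j : 'I_m) (x : outcome) : R :=
  \sum_(i < m | (j <= i)%N) ind (val (x i) == 1%N) * gam x i * Zind k x i.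

Definition prob_W_gt (k : R) (j : 'I_m) (lambda : R) : R :=
  \sum_(x : outcome | lambda < Wj k j x) seq_prob x.
End Game.

From mathcomp Require Import all_boot all_order all_algebra.
From mathcomp Require Import reals sequences exp.
From mathcomp Require Import ring lra.
Set Implicit Arguments. Unset Strict Implicit. Unset Printing Implicit Defensive.
Import Order.TTheory GRing.Theory Num.Theory.
Local Open Scope ring_scope.

(* Exponential supermartingale.  Starting from 1, multiply by e^{g/5} when
   X_i = 1 and by e^{-3 g} when X_i = 2 (g = gamma_i), but only while the
   2-cost sum_{r < i} 1{X_r = 2} gamma_r is at most k.  As q >= p/4 and
   g <= 1, a round multiplies the expectation by at most
   p e^{g/5} + q e^{-3g} + 1 - p - q <= 1, so the final value V has E[V] <= 1.
   The 2-cost accumulated while active overshoots k by at most one term, so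
   ln V >= W/5 - 3(k + 1); since W_j <= W, Markov's inequality concludes. *)

Section RoundBound.
Variable R : realType.

Lemma expRN_ge_81_100 (x : R) : x <= 1/5 -> 81/100 <= expR (- x).
Proof.
move=> x_le.
have -> : expR (- x) = expR (- (x / 2)) ^+ 2 by rewrite -expRM_natl; congr expR; lra.
have half_ge : 9/10 <= expR (- (x / 2)) by apply: le_trans (expR_ge1Dx _); lra.
by apply: le_trans (lerXn2r 2 _ _ half_ge); rewrite ?nnegrE; lra.
Qed.

Lemma geometric15_ge (v : R) : 81/100 <= v <= 1 -> 4 * (1 - v) <= v * (1 - v ^+ 15).
Proof.
move=> /andP[v_ge v_le1].
have sum_ge : 4 <= \sum_(i < 15) v ^+ i.+1.
  have num : 4 <= \sum_(i < 15) (81/100 : R) ^+ i.+1.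
    by rewrite !big_ord_recr big_ord0 /=; lra.
  apply: le_trans num _; apply: ler_sum => i _.
  by apply: lerXn2r; rewrite ?nnegrE //; lra.
have -> : v * (1 - v ^+ 15) = (1 - v) * \sum_(i < 15) v ^+ i.+1.
  have geom : 1 - v ^+ 15 = (1 - v) * \sum_(i < 15) v ^+ i.
    by rewrite -opprB subrX1 -mulNr opprB.
  rewrite geom mulrCA mulr_sumr.
  by congr (_ * _); apply: eq_bigr => i _; rewrite exprS.
by rewrite mulrC ler_wpM2l //; lra.
Qed.

Lemma round_mgf_le1 (p q g : R) : 0 <= p -> p / 4 <= q -> 0 <= g -> g <= 1 ->
  p * expR (g / 5) + q * expR (- (3 * g)) + (1 - p - q) <= 1.
Proof.
move=> p_ge0 pq g_ge0 g_le1.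
set v := expR (- (g / 5)).
have v_gt0 : 0 < v := expR_gt0 _.
have v_le1 : v <= 1 by rewrite /v expR_le1; lra.
have v_ge : 81/100 <= v by apply: expRN_ge_81_100; lra.
have -> : expR (g / 5) = v^-1 by rewrite /v expRN invrK.
have -> : expR (- (3 * g)) = v ^+ 15 by rewrite /v -expRM_natl; congr expR; lra.
have geo : 4 * (1 - v) <= v * (1 - v ^+ 15) by apply: geometric15_ge; rewrite v_ge.
have w_ge0 : 0 <= v * (1 - v ^+ 15) by rewrite mulr_ge0 ?subr_ge0 ?exprn_ile1 //; lra.
have key : p * (1 - v) <= q * (v * (1 - v ^+ 15)) by nra.
rewrite -subr_ge0.
have -> : 1 - (p * v^-1 + q * v ^+ 15 + (1 - p - q)) =
    (q * (v * (1 - v ^+ 15)) - p * (1 - v)) / v by field; rewrite gt_eqF.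
by rewrite divr_ge0 ?subr_ge0 // ltW.
Qed.
End RoundBound.

Section FfunCons.
Variables (T : finType) (m : nat).

Definition ffcons (o : T) (y : {ffun 'I_m -> T}) : {ffun 'I_m.+1 -> T} :=
  [ffun i => if unlift ord0 i is Some j then y j else o].

Lemma codom_ffcons o y : codom (ffcons o y) = o :: codom y.
Proof.
rewrite !codomE enum_ordSl /= ffunE unlift_none -map_comp; congr cons.
by apply: eq_map => j /=; rewrite ffunE liftK.
Qed.

Lemma big_ffunS (V : Type) (idx : V) (op : Monoid.com_law idx)
    (F : {ffun 'I_m.+1 -> T} -> V) :
  \big[op/idx]_x F x = \big[op/idx]_(o : T) \big[op/idx]_(y : {ffun 'I_m -> T}) F (ffcons o y).
Proof.
rewrite pair_big (reindex (fun p => ffcons p.1 p.2)) //=.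
apply: onW_bij.
exists (fun x : {ffun 'I_m.+1 -> T} => (x ord0, [ffun j => x (lift ord0 j)])).
  move=> [o y] /=; rewrite ffunE unlift_none; congr pair.
  by apply/ffunP => j; rewrite !ffunE liftK.
move=> x; apply/ffunP => i; rewrite ffunE.
by case: unliftP => [j ->|->]; rewrite ?ffunE.
Qed.
End FfunCons.

Lemma nth_codom_ord (T : finType) m (f : 'I_m -> T) (x0 : T) (i : 'I_m) :
  nth x0 (codom f) i = f i.
Proof. by rewrite codomE (nth_map i) ?size_enum_ord // nth_ord_enum. Qed.

Section Game.
Variable R : realType.
Implicit Types (P Q G : seq 'I_3 -> R) (s : seq 'I_3) (k : R).

Definition path_prob P Q s : R :=
  \prod_(0 <= i < size s) round_prob (P (take i s)) (Q (take i s)) (nth ord0 s i).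

Definition cost G s i : R := ind R (val (nth ord0 s i) == 2%N) * G (take i s).

Definition cost_before G s n : R := \sum_(0 <= i < n) cost G s i.

Definition gain G k s : R := \sum_(0 <= i < size s)
  ind R (val (nth ord0 s i) == 1%N) * G (take i s) * ind R (cost_before G s i.+1 <= k).

Definition log_factor (budget g : R) (o : 'I_3) : R :=
  if 0 <= budget then
    (if val o == 1%N then g / 5 else if val o == 2%N then - (3 * g) else 0)
  else 0.

Definition potential G k s : R := expR (\sum_(0 <= i < size s)
  log_factor (k - cost_before G s i) (G (take i s)) (nth ord0 s i)).

Lemma ind_ge0 b : 0 <= ind R b. Proof. by case: b. Qed.

Lemma round_prob_ge0 (p q : R) o : 0 <= p -> 0 <= q -> p + q <= 1 ->
  0 <= round_prob p q o.
Proof. by rewrite /round_prob; case: ifP => _; [|case: ifP => _]; lra. Qed.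

Lemma round_factor_le1 (p q g budget : R) : 0 <= p -> p / 4 <= q -> 0 <= g -> g <= 1 ->
  \sum_(o : 'I_3) round_prob p q o * expR (log_factor budget g o) <= 1.
Proof.
move=> p_ge0 pq g_ge0 g_le1.
rewrite !big_ord_recl big_ord0 /round_prob /log_factor /=.
case: ifP => _; rewrite ?expR0; last lra.
have := round_mgf_le1 p_ge0 pq g_ge0 g_le1; lra.
Qed.

Lemma valid_adversary_cons n P Q G o : valid_adversary n.+1 P Q G ->
  valid_adversary n (fun t => P (o :: t)) (fun t => Q (o :: t)) (fun t => G (o :: t)).
Proof. by move=> V s s_lt; apply: V. Qed.

Lemma path_prob_cons P Q o s : path_prob P Q (o :: s) =
  round_prob (P [::]) (Q [::]) o * path_prob (fun t => P (o :: t)) (fun t => Q (o :: t)) s.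
Proof. by rewrite /path_prob /= big_nat_recl. Qed.

Lemma cost_before_cons G o s n : cost_before G (o :: s) n.+1 =
  ind R (val o == 2%N) * G [::] + cost_before (fun t => G (o :: t)) s n.
Proof. by rewrite /cost_before big_nat_recl. Qed.

Lemma potential_cons G k o s : potential G k (o :: s) =
  expR (log_factor k (G [::]) o) *
  potential (fun t => G (o :: t)) (k - ind R (val o == 2%N) * G [::]) s.
Proof.
rewrite /potential -[size (o :: s)]/(size s).+1 big_nat_recl // expRD.
have -> : cost_before G (o :: s) 0 = 0 by rewrite /cost_before big_geq.
rewrite subr0.
by congr (_ * expR _); apply: eq_bigr => i _; rewrite cost_before_cons opprD addrA.
Qed.

Lemma expected_potential_le1 n P Q G k : valid_adversary n P Q G ->
  \sum_(x : {ffun 'I_n -> 'I_3}) path_prob P Q (codom x) * potential G k (codom x) <= 1.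
Proof.
(* Condition on the first outcome o: the remaining rounds form a valid game
   for the adversary shifted by o, with budget decreased by the cost of o. *)
elim: n P Q G k => [|n IHn] P Q G k V.
  rewrite (eq_bigr (fun _ => 1)) => [|x _].
    by rewrite sumr_const card_ffun !card_ord.
  rewrite [codom x]size0nil ?size_codom ?card_ord //.
  by rewrite /path_prob /potential !big_geq // expR0 mulr1.
have [p_ge0 _ pq q_le [g_ge0 g_le1]] := V [::] isT.
rewrite big_ffunS; apply: (le_trans _ (round_factor_le1 k p_ge0 pq g_ge0 g_le1)).
apply: ler_sum => o _.
under eq_bigr => y _ do rewrite codom_ffcons path_prob_cons potential_cons mulrACA.
rewrite -mulr_sumr ler_piMr ?mulr_ge0 ?expR_ge0 ?round_prob_ge0 //; try lra.
exact/IHn/valid_adversary_cons.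
Qed.

Lemma log_factor_eq k a g (o : 'I_3) : log_factor (k - a) g o =
  ind R (val o == 1%N) * g * ind R (a + ind R (val o == 2%N) * g <= k) / 5
  - 3 * (ind R (a <= k) * (ind R (val o == 2%N) * g)).
Proof.
rewrite /log_factor subr_ge0.
case: o => [[|[|[|n]]] o_lt] //=; rewrite /ind ?mul0r ?mul1r ?addr0.
all: by case: (a <= k); lra.
Qed.

Lemma potential_expR G k s : potential G k s =
  expR (gain G k s / 5 - 3 * \sum_(0 <= i < size s) ind R (cost_before G s i <= k) * cost G s i).
Proof.
rewrite /potential /gain mulr_suml mulr_sumr -sumrB; congr expR.
apply: eq_bigr => i _.
by rewrite log_factor_eq /cost_before big_nat_recr.
Qed.

Lemma sum_truncated_le (d : nat -> R) k n : 0 <= k + 1 -> (forall i, 0 <= d i <= 1) ->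
  \sum_(0 <= i < n) ind R (\sum_(0 <= j < i) d j <= k) * d i <= k + 1.
Proof.
move=> k_ge d01; pose A n := \sum_(0 <= j < n) d j.
suff [] : \sum_(0 <= i < n) ind R (A i <= k) * d i <= k + 1 /\
    (A n <= k -> \sum_(0 <= i < n) ind R (A i <= k) * d i = A n) by [].
elim: n => [|n [IH_le IH_eq]]; first by rewrite /A !big_geq.
have A_S : A n.+1 = A n + d n by rewrite /A big_nat_recr.
have /andP[d_ge0 d_le1] := d01 n.
rewrite big_nat_recr //= A_S /ind; case: ifP => [An_le|/negbT].
  by rewrite IH_eq // mul1r; split; lra.
rewrite -ltNge mul0r addr0 => An_gt; split => //; lra.
Qed.

Lemma cost_bounds m P Q G s i : valid_adversary m P Q G -> size s = m ->
  0 <= cost G s i <= 1.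
Proof.
move=> V s_size; rewrite /cost; case: (ltnP i (size s)) => [i_lt|i_ge].
  have take_lt : (size (take i s) < m)%N by rewrite size_take i_lt -s_size.
  have [_ _ _ _ [g_ge0 g_le1]] := V _ take_lt.
  by rewrite /ind; case: ifP => _; apply/andP; split; lra.
by rewrite nth_default // /ind mul0r lexx ler01.
Qed.

Lemma potential_ge_of_gain_gt m P Q G k lambda s : valid_adversary m P Q G ->
    size s = m -> 0 <= k -> lambda < gain G k s ->
  1 <= potential G k s * expR (- (lambda / 5) + 3 * (k + 1)).
Proof.
move=> V s_size k_ge0 gain_gt.
rewrite potential_expR -expRD -[leLHS]expR0 ler_expR.
have k1_ge0 : 0 <= k + 1 by lra.
have := sum_truncated_le (size s) k1_ge0 (fun i => cost_bounds i V s_size).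
rewrite -/(cost_before G s _); lra.
Qed.

Lemma hist_codom m (x : outcome m) (i : 'I_m) : hist x i = take i (codom x).
Proof.
rewrite /hist codomE -map_take; congr map; apply: (inj_map val_inj).
rewrite -(eq_filter (a1 := preim val (fun n => (n < i)%N))) // -filter_map.
rewrite map_take val_enum_ord take_iota (minn_idPl (ltnW (ltn_ord i))).
exact: filter_iota_ltn (ltnW (ltn_ord i)).
Qed.

Lemma hist_size_lt m (x : outcome m) (i : 'I_m) : (size (hist x i) < m)%N.
Proof. by rewrite hist_codom size_take size_codom card_ord !ltn_ord. Qed.

Lemma seq_prob_codom m P Q (x : outcome m) : seq_prob P Q x = path_prob P Q (codom x).
Proof.
rewrite /seq_prob /path_prob size_codom card_ord big_mkord.
by apply: eq_bigr => i _; rewrite hist_codom nth_codom_ord.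
Qed.

Lemma seq_prob_ge0 m P Q G (x : outcome m) : valid_adversary m P Q G -> 0 <= seq_prob P Q x.
Proof.
move=> V; apply: prodr_ge0 => i _.
have [p_ge0 _ pq q_le _] := V _ (hist_size_lt x i).
by apply: round_prob_ge0; lra.
Qed.

Lemma Zind_codom m G k (x : outcome m) (i : 'I_m) :
  Zind G k x i = ind R (cost_before G (codom x) i.+1 <= k).
Proof.
rewrite /Zind /cost_before (big_nat_widen 0 i.+1 m) ?ltn_ord // big_mkord.
by congr (ind R (_ <= k)); apply: eq_bigr => j _; rewrite /cost /gam hist_codom nth_codom_ord.
Qed.

Lemma Wj_le_gain m P Q G k j (x : outcome m) : valid_adversary m P Q G ->
  Wj G k j x <= gain G k (codom x).
Proof.
move=> V; rewrite /Wj /gain size_codom card_ord big_mkord [leLHS]big_mkcond.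
apply: ler_sum => i _; rewrite Zind_codom /gam hist_codom nth_codom_ord.
have [_ _ _ _ [g_ge0 _]] := V _ (hist_size_lt x i); rewrite hist_codom in g_ge0.
by case: ifP => // _; rewrite !mulr_ge0 ?ind_ge0.
Qed.
End Game.

Theorem claimA1 (R : realType) (m : nat) (P Q G : seq 'I_3 -> R) :
  valid_adversary m P Q G ->
  forall (k : R), 0 <= k ->
  forall (lambda : R) (j : 'I_m),
    prob_W_gt P Q G k j lambda <= expR (- (lambda / 5) + 3 * (k + 1)).
Proof.
move=> V k k_ge0 lambda j; set C := expR _.
have markov x : (if lambda < Wj G k j x then seq_prob P Q x else 0) <=
    seq_prob P Q x * (potential G k (codom x) * C).
  case: ifP => [W_gt|_]; last by rewrite !mulr_ge0 ?(seq_prob_ge0 _ V) ?expR_ge0.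
  apply: ler_peMr; first exact: seq_prob_ge0 V.
  apply: (potential_ge_of_gain_gt V); rewrite ?size_codom ?card_ord //.
  exact: lt_le_trans W_gt (Wj_le_gain _ _ _ V).
rewrite /prob_W_gt big_mkcond (le_trans (ler_sum _ (fun x _ => markov x))) //.
under eq_bigr => x _ do rewrite mulrA seq_prob_codom.
by rewrite -mulr_suml ler_piMl ?expR_ge0 ?expected_potential_le1.
Qed.
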